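(* Let $\mathcal H$ be a complex separable Hilbert space, let $\mathcal A=(A_n)_{n\ge0}$ be a sequence of positive invertible bounded operators on $\mathcal H$ with $\sup_n\|A_n\|<\infty$, and suppose the operator-valued weighted shift $W_{\mathcal A}$ on $\ell^2(\mathcal H)$ is quadratically hyponormal. If $A_n=A_{n+1}=A_{n+2}$ for some $n\ge0$, then $A_k=A_n$ for every $k\ge1$.
   Context: $\ell^2(\mathcal H)=\{(x_n)_{n\ge0}: x_n\in\mathcal H,\ \sum_n\|x_n\|^2<\infty\}$; the operator-valued weighted shift is $W_{\mathcal A}(x_0,x_1,\dots)=(0,A_0x_0,A_1x_1,\dots)$. A bounded operator $T$ is hyponormal if $T^*T-TT^*\ge0$, and quadratically hyponormal if $T+\lambda T^2$ is hyponormal for every $\lambda\in\mathbb C$. *)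

From HB Require Import structures.
From mathcomp Require Import all_boot all_order all_algebra.
From mathcomp Require Import reals.
From mathcomp Require Import complex.
From Stdlib Require Import ClassicalEpsilon.
Set Implicit Arguments. Unset Strict Implicit. Unset Printing Implicit Defensive.
Import GRing.Theory Num.Theory.
Local Open Scope ring_scope.
Local Open Scope complex_scope.

Record chilbert (R : realType) := CHilbert {
  hs_car :> lmodType R[i];
  hs_inner : hs_car -> hs_car -> R[i];
  hs_linl : forall (a : R[i]) (x y z : hs_car),
      hs_inner (a *: x + y) z = a * hs_inner x z + hs_inner y z;
  hs_conj : forall x y : hs_car, hs_inner y x = (hs_inner x y)^*;
  hs_pos : forall x : hs_car, 0 <= hs_inner x x;
  hs_def : forall x : hs_car, hs_inner x x = 0 -> x = 0;
  hs_complete : forall u : nat -> hs_car,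
      (forall e : R, 0 < e -> exists N : nat, forall m n : nat, (N <= m)%N -> (N <= n)%N ->
          Num.sqrt (complex.Re (hs_inner (u m - u n) (u m - u n))) < e) ->
      exists l : hs_car, forall e : R, 0 < e -> exists N : nat, forall n : nat, (N <= n)%N ->
          Num.sqrt (complex.Re (hs_inner (u n - l) (u n - l))) < e;
  hs_separable : exists d : nat -> hs_car, forall (x : hs_car) (e : R), 0 < e ->
      exists n : nat, Num.sqrt (complex.Re (hs_inner (x - d n) (x - d n))) < e
}.

Section Defs.
Variables (R : realType) (H : chilbert R).

Definition hnorm (x : H) : R := Num.sqrt (complex.Re (hs_inner x x)).

Definition hlinear (T : H -> H) : Prop :=
  forall (a : R[i]) (x y : H), T (a *: x + y) = a *: T x + T y.
Definition hbounded (T : H -> H) : Prop :=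
  exists M : R, forall x : H, hnorm (T x) <= M * hnorm x.
Definition bounded_op (T : H -> H) : Prop := hlinear T /\ hbounded T.
(* positive operator: <T x, x> >= 0 for all x (order of C: real and >= 0) *)
Definition hpositive (T : H -> H) : Prop := forall x : H, 0 <= hs_inner (T x) x.
Definition hinvertible (T : H -> H) : Prop :=
  exists B : H -> H, bounded_op B /\ (forall x, T (B x) = x) /\ (forall x, B (T x) = x).

Definition l2 (x : nat -> H) : Prop :=
  exists M : R, forall N : nat, \sum_(k < N) hnorm (x k) ^+ 2 <= M.

Definition cseries_to (u : nat -> R[i]) (l : R[i]) : Prop :=
  forall e : R, 0 < e -> exists N : nat, forall n : nat, (N <= n)%N ->
    `|\sum_(k < n) u k - l| < e%:C.
Definition cseries_sum (u : nat -> R[i]) : R[i] :=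
  epsilon (inhabits 0) (fun l => cseries_to u l).

Definition l2inner (x y : nat -> H) : R[i] :=
  cseries_sum (fun n => hs_inner (x n) (y n)).

Definition l2_adjoint (S T : (nat -> H) -> (nat -> H)) : Prop :=
  (forall x, l2 x -> l2 (S x)) /\
  (forall x y, l2 x -> l2 y -> l2inner (T x) y = l2inner x (S y)).

Definition hyponormal (T : (nat -> H) -> (nat -> H)) : Prop :=
  forall S, l2_adjoint S T ->
    forall x, l2 x -> 0 <= l2inner (fun n => S (T x) n - T (S x) n) x.

Definition quad_hyponormal (T : (nat -> H) -> (nat -> H)) : Prop :=
  forall lam : R[i], hyponormal (fun x n => T x n + lam *: T (T x) n).

Definition wshift (A : nat -> H -> H) (x : nat -> H) : nat -> H :=
  fun n => match n with 0%N => 0 | k.+1 => A k (x k) end.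

End Defs.

From mathcomp Require Import all_boot all_order all_algebra.
From mathcomp Require Import classical_sets reals complex.
From mathcomp Require Import ring lra zify.
From Stdlib Require Import ClassicalEpsilon FunctionalExtensionality PropExtensionality.
Import Order.TTheory GRing.Theory Num.Theory.
Set Implicit Arguments. Unset Strict Implicit. Unset Printing Implicit Defensive.
Local Open Scope ring_scope.
Local Open Scope complex_scope.
Local Notation Re := complex.Re.
Local Notation Im := complex.Im.

(* Hyponormality of W + s W^2 with s real, tested on a vector supported on three
   consecutive coordinates, gives 0 <= s^4 a + s^6 b for all s > 0, hence 0 <= a.
   If A_n = A_(n+1) = A_(n+2), the test vector (u, -s A_(n+2) u, s^2 A_(n+3) A_(n+2) u)
   at coordinates n + 2, n + 3, n + 4 gives a = -|P|^2 with
   P = A_(n+3)^2 A_(n+2) u - A_(n+2)^3 u. Since A_(n+2) is onto, A_(n+3)^2 = A_(n+2)^2,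
   and uniqueness of positive square roots yields A_(n+3) = A_(n+2). A second family
   of test vectors, using the invertibility of A_(p+1) and A_p, propagates the equality
   downwards: A_(p+2) = A_(p+3) = A_(p+4) implies A_(p+1)^2 = A_(p+4)^2, so
   A_(p+1) = A_(p+4). Inducting in both directions reaches every A_k with k >= 1. *)

Section InnerProduct.
Variables (R : realType) (H : chilbert R).
Implicit Types (x y z : H) (a : R[i]).
Local Notation ip := (@hs_inner R H).

Definition sqnorm x : R := Re (ip x x).

Lemma inner0l z : ip 0 z = 0.
Proof.
have := hs_linl 1 (0 : H) 0 z; rewrite scale1r addr0 mul1r => h.
by apply: (addrI (ip 0 z)); rewrite addr0 -h.
Qed.

Lemma innerDl x y z : ip (x + y) z = ip x z + ip y z.
Proof. by have := hs_linl 1 x y z; rewrite scale1r mul1r. Qed.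

Lemma innerZl a x z : ip (a *: x) z = a * ip x z.
Proof. by have := hs_linl a x 0 z; rewrite addr0 inner0l addr0. Qed.

Lemma innerNl x z : ip (- x) z = - ip x z.
Proof. by rewrite -scaleN1r innerZl mulN1r. Qed.

Lemma innerBl x y z : ip (x - y) z = ip x z - ip y z.
Proof. by rewrite innerDl innerNl. Qed.

Lemma innerDr x y z : ip z (x + y) = ip z x + ip z y.
Proof. by rewrite hs_conj innerDl rmorphD /= -!hs_conj. Qed.

Lemma innerZr a x z : ip z (a *: x) = a^*%C * ip z x.
Proof. by rewrite hs_conj innerZl rmorphM /= -hs_conj. Qed.

Lemma inner0r z : ip z 0 = 0.
Proof. by rewrite hs_conj inner0l conjc0. Qed.

Lemma innerNr x z : ip z (- x) = - ip z x.
Proof. by rewrite -scaleN1r innerZr rmorphN1 mulN1r. Qed.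

Lemma innerBr x y z : ip z (x - y) = ip z x - ip z y.
Proof. by rewrite innerDr innerNr. Qed.

Lemma Re_conjc a : Re a^* = Re a.
Proof. by case: a. Qed.

Lemma Re_realM (r : R) a : Re (r%:C * a) = r * Re a.
Proof. by case: a => a1 a2; simpc. Qed.

Lemma Re_innerC x y : Re (ip x y) = Re (ip y x).
Proof. by rewrite [ip y x]hs_conj Re_conjc. Qed.

Lemma sqnorm_ge0 x : 0 <= sqnorm x.
Proof. by have := hs_pos x; rewrite lecE => /andP[]. Qed.

Lemma inner_self x : ip x x = (sqnorm x)%:C.
Proof. by have /ger0_Im := hs_pos x; rewrite /sqnorm; case: (ip x x) => a b /= ->. Qed.

Lemma sqnorm_eq0 x : sqnorm x = 0 -> x = 0.
Proof. by move=> h; apply: hs_def; rewrite inner_self h. Qed.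

Lemma sqnormD x y : sqnorm (x + y) = sqnorm x + 2 * Re (ip x y) + sqnorm y.
Proof. by rewrite /sqnorm innerDl !innerDr !raddfD /= (Re_innerC y x); ring. Qed.

Lemma sqnormN x : sqnorm (- x) = sqnorm x.
Proof. by rewrite /sqnorm innerNl innerNr opprK. Qed.

Lemma sqnormB x y : sqnorm (x - y) = sqnorm x - 2 * Re (ip x y) + sqnorm y.
Proof. by rewrite sqnormD sqnormN innerNr raddfN /=; ring. Qed.

Lemma sqnormZ a x : sqnorm (a *: x) = (Re a ^+ 2 + Im a ^+ 2) * sqnorm x.
Proof. by rewrite /sqnorm innerZl innerZr inner_self; case: a => a1 a2 /=; simpc; ring. Qed.

Lemma sqnormZr (r : R) x : sqnorm (r%:C *: x) = r ^+ 2 * sqnorm x.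
Proof. by rewrite sqnormZ /= expr0n /= addr0. Qed.

Lemma hnorm_sqr x : hnorm x ^+ 2 = sqnorm x.
Proof. by rewrite /hnorm sqr_sqrtr // sqnorm_ge0. Qed.

Lemma Re_inner_le x y : 2 * Re (ip x y) <= sqnorm x + sqnorm y.
Proof. by have := sqnorm_ge0 (x - y); rewrite sqnormB; lra. Qed.

Lemma Re_inner_ge x y : - (sqnorm x + sqnorm y) <= 2 * Re (ip x y).
Proof. by have := sqnorm_ge0 (x + y); rewrite sqnormD; lra. Qed.

Lemma sqnormD_le x y : sqnorm (x + y) <= 2 * sqnorm x + 2 * sqnorm y.
Proof. by rewrite sqnormD; have := Re_inner_le x y; lra. Qed.

Lemma sqnormB_le x y : sqnorm (x - y) <= 2 * sqnorm x + 2 * sqnorm y.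
Proof. by rewrite sqnormB; have := Re_inner_ge x y; lra. Qed.

Lemma sqnorm_le_of_hnorm (T : H -> H) (K : R) :
  (forall x, hnorm (T x) <= K * hnorm x) -> forall x, sqnorm (T x) <= K ^+ 2 * sqnorm x.
Proof.
move=> hK x; rewrite -!hnorm_sqr -exprMn.
have := hK x; have := sqrtr_ge0 (Re (ip (T x) (T x))); have := sqrtr_ge0 (Re (ip x x)).
rewrite /hnorm => *; rewrite ler_pXn2r ?nnegrE //; lra.
Qed.

End InnerProduct.

Section Operators.
Variables (R : realType) (H : chilbert R).
Implicit Types (x y : H) (a : R[i]).
Local Notation ip := (@hs_inner R H).
Variable T : H -> H.
Hypothesis linT : hlinear T.

Lemma hlinear0 : T 0 = 0.
Proof.
have := linT 1 0 0; rewrite scale1r addr0 scale1r => h.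
by apply: (addrI (T 0)); rewrite addr0 -h.
Qed.

Lemma hlinearD x y : T (x + y) = T x + T y.
Proof. by have := linT 1 x y; rewrite !scale1r. Qed.

Lemma hlinearZ a x : T (a *: x) = a *: T x.
Proof. by have := linT a x 0; rewrite !addr0 hlinear0 addr0. Qed.

Lemma hlinearN x : T (- x) = - T x.
Proof. by rewrite -scaleN1r hlinearZ scaleN1r. Qed.

Lemma hlinearB x y : T (x - y) = T x - T y.
Proof. by rewrite hlinearD hlinearN. Qed.

Hypothesis posT : hpositive T.

Lemma hpositive_Re_ge0 x : 0 <= Re (ip (T x) x).
Proof. by have := posT x; rewrite lecE => /andP[]. Qed.

(* Polarization with the vectors x + y and x + j y, where j = i is kept
   abstract for [ring]: only j^* != j matters. *)
Lemma hpositive_selfadj x y : ip (T x) y = ip x (T y).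
Proof.
have d v : ip (T v) v = ip v (T v) by rewrite [ip v _]hs_conj; exact/esym/geC0_conj.
have [j ij] : exists j : R[i], j = 'i%C by exists 'i%C.
have e1 := d (x + y); have e2 := d (x + j *: y).
rewrite !hlinearD !hlinearZ !innerDl !innerDr !innerZl !innerZr (d x) (d y) in e1 e2.
have hj : j^* - j != 0 by rewrite ij eq_complex /= negb_and; apply/orP; right; apply/eqP; lra.
move: hj e1 e2.
move: (ip (T x) y) (ip x (T y)) (ip (T y) x) (ip y (T x)) (ip x (T x)) (ip y (T y)).
move=> a b c e f g hj e1 e2.
have : (j^* - j) * (a - b) = 0.
  have -> : (j^* - j) * (a - b) =
      ((f + j^* * a + (j * c + j * (j^* * g))) - (f + j^* * b + (j * e + j * (j^* * g))))
      - j * ((f + a + (c + g)) - (f + b + (e + g))) by ring.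
  by rewrite e1 e2 !subrr mulr0 subr0.
by move/eqP; rewrite mulf_eq0 (negbTE hj) subr_eq0 => /eqP.
Qed.

End Operators.

Section ComplexSeries.
Variable R : realType.
Implicit Types (a b : R[i]) (u v : nat -> R[i]).

Definition cabs a : R := Num.sqrt (Re a ^+ 2 + Im a ^+ 2).

Lemma normcE a : `|a| = (cabs a)%:C.
Proof. exact: normc_def. Qed.

Lemma cabs_ge0 a : 0 <= cabs a.
Proof. exact: sqrtr_ge0. Qed.

Lemma ltc_norm a e : (`|a| < e%:C) = (cabs a < e).
Proof. by rewrite normcE ltcR. Qed.

Lemma cabsD_le a b : cabs (a + b) <= cabs a + cabs b.
Proof. by rewrite -lecR rmorphD /= -!normcE ler_normD. Qed.

Lemma cabsM a b : cabs (a * b) = cabs a * cabs b.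
Proof. by apply: complexI; rewrite rmorphM /= -!normcE normrM. Qed.

Lemma cabsN a : cabs (- a) = cabs a.
Proof. by apply: complexI; rewrite -!normcE normrN. Qed.

Lemma cabs_eq0 a : cabs a = 0 -> a = 0.
Proof. by move=> h; apply/eqP; rewrite -normr_eq0 normcE h. Qed.

Lemma cabs_lt a e : 0 < e -> 2 * `|Re a| <= e -> 2 * `|Im a| <= e -> cabs a < e.
Proof.
move=> e0 h1 h2; rewrite /cabs.
have : Re a ^+ 2 + Im a ^+ 2 < e ^+ 2.
  rewrite -(real_normK (num_real (Re a))) -(real_normK (num_real (Im a))).
  have := normr_ge0 (Re a); have := normr_ge0 (Im a); nra.
by rewrite -ltr_sqrt ?exprn_gt0 // sqrtr_sqr gtr0_norm.
Qed.

Lemma cabs_triangle_lt a b c e :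
  cabs (a - b) < e / 2 -> cabs (a - c) < e / 2 -> cabs (b - c) < e.
Proof.
have -> : b - c = (a - c) + - (a - b) by ring.
by move=> hab hac; apply: le_lt_trans (cabsD_le _ _) _; rewrite cabsN; lra.
Qed.

Lemma cseries_to_uniq u l1 l2 : cseries_to u l1 -> cseries_to u l2 -> l1 = l2.
Proof.
move=> h1 h2; apply/eqP; rewrite -subr_eq0; apply/eqP/cabs_eq0/eqP.
rewrite eq_le cabs_ge0 andbT; apply/ler_addgt0Pr => e e0; rewrite add0r; apply: ltW.
have e2 : 0 < e / 2 by rewrite divr_gt0.
have [N1 H1] := h1 _ e2; have [N2 H2] := h2 _ e2.
have := H1 (maxn N1 N2) (leq_maxl _ _); have := H2 (maxn N1 N2) (leq_maxr _ _).
by rewrite !ltc_norm => d2 d1; exact: cabs_triangle_lt d1 d2.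
Qed.

Lemma cseries_sumE u l : cseries_to u l -> cseries_sum u = l.
Proof.
move=> hl; have hsum := epsilon_spec (inhabits 0) _ (ex_intro (cseries_to u) l hl).
exact: cseries_to_uniq hsum hl.
Qed.

Lemma cseries_to_eq u v l :
  (forall e, 0 < e -> exists N, forall n, (N <= n)%N ->
     cabs (\sum_(k < n) u k - \sum_(k < n) v k) < e) ->
  cseries_to u l -> cseries_to v l.
Proof.
move=> duv hu e e0.
have e2 : 0 < e / 2 by rewrite divr_gt0.
have [N1 H1] := duv _ e2; have [N2 H2] := hu _ e2.
exists (maxn N1 N2) => n hn; rewrite ltc_norm.
have := H2 n (leq_trans (leq_maxr _ _) hn); rewrite ltc_norm.
exact/cabs_triangle_lt/H1/(leq_trans (leq_maxl _ _) hn).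
Qed.

Lemma eq_cseries_sum u v :
  (forall e, 0 < e -> exists N, forall n, (N <= n)%N ->
     cabs (\sum_(k < n) u k - \sum_(k < n) v k) < e) ->
  cseries_sum u = cseries_sum v.
Proof.
move=> duv; rewrite /cseries_sum; congr (epsilon _).
apply: functional_extensionality => l; apply: propositional_extensionality.
split; apply: cseries_to_eq => // e /duv[N HN].
by exists N => n /HN; rewrite -cabsN opprB.
Qed.

End ComplexSeries.

Lemma cabs_inner_lt (R : realType) (H : chilbert R) (x y : H) e :
  0 < e -> sqnorm x + sqnorm y < e -> cabs (hs_inner x y) < e.
Proof.
move=> e0 h; apply: cabs_lt => //.
  have := Re_inner_le x y; have := Re_inner_ge x y => hge hle.
  have : `|Re (hs_inner x y)| < e / 2 by rewrite ltr_norml; lra.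
  move=> ?; lra.
have := Re_inner_le x ('i%C *: y); have := Re_inner_ge x ('i%C *: y).
rewrite innerZr sqnormZ /= expr0n /= expr1n add0r mul1r.
rewrite (_ : Re _ = Im (hs_inner x y)); last by case: (hs_inner x y) => a b; simpc.
move=> hge hle.
have : `|Im (hs_inner x y)| < e / 2 by rewrite ltr_norml; lra.
move=> ?; lra.
Qed.

Section NonnegativeSums.
Variable R : realType.

Lemma big_supp3 (V : zmodType) (g : nat -> V) p n :
  (forall k, k != p -> k != p.+1 -> k != p.+2 -> g k = 0) -> (p.+3 <= n)%N ->
  \sum_(k < n) g k = g p + g p.+1 + g p.+2.
Proof.
move=> hg hn; rewrite -(big_mkord xpredT) (@big_cat_nat _ _ _ p 0 n) //=; last by lia.
rewrite big1_seq ?add0r; last first.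
  by move=> k /andP[_]; rewrite mem_index_iota => /andP[_ hk]; apply: hg; apply/eqP; lia.
rewrite big_ltn; last by lia.
rewrite big_ltn; last by lia.
rewrite big_ltn; last by lia.
rewrite big1_seq ?addr0 ?addrA //.
by move=> k /andP[_]; rewrite mem_index_iota => /andP[hk _]; apply: hg; apply/eqP; lia.
Qed.

Lemma ler_psum_widen (h : nat -> R) N N' : (forall k, 0 <= h k) -> (N <= N')%N ->
  \sum_(k < N) h k <= \sum_(k < N') h k.
Proof.
move=> h0 hN; rewrite -!(big_mkord xpredT) (@big_cat_nat _ _ _ N 0 N') //= lerDl.
exact: sumr_ge0.
Qed.

(* The partial sums approach their supremum. *)
Lemma bounded_psum_tail_lt (h : nat -> R) : (forall k, 0 <= h k) ->
  (exists M, forall N, \sum_(k < N) h k <= M) ->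
  forall e, 0 < e -> exists N, forall k, (N <= k)%N -> h k < e.
Proof.
move=> h0 [M hM] e e0.
pose E := fun r : R => exists N, r = \sum_(k < N) h k.
have hs : has_sup E.
  split; first by exists 0; exists 0%N; rewrite big_ord0.
  by exists M => r [N ->].
have [r [N ->] hr] := sup_adherent e0 hs.
exists N => k hk.
have : \sum_(i < k.+1) h i <= sup E by apply: sup_upper_bound => //; exists k.+1.
have := ler_psum_widen h0 hk.
rewrite big_ord_recr /= => hNk hk1; lra.
Qed.

End NonnegativeSums.

Section PositiveBounded.
Variables (R : realType) (H : chilbert R).
Local Notation ip := (@hs_inner R H).
Variables (C : H -> H) (K : R).
Hypotheses (linC : hlinear C) (posC : hpositive C).
Hypothesis boundC : forall x, sqnorm (C x) <= K * sqnorm x.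

Lemma Re_form_subZ u v (r : R) :
  Re (ip (C (u - r%:C *: v)) (u - r%:C *: v)) =
  Re (ip (C u) u) - 2 * r * Re (ip (C u) v) + r ^+ 2 * Re (ip (C v) v).
Proof.
rewrite (hlinearB linC) (hlinearZ linC) !innerBl !innerBr !innerZl !innerZr.
rewrite (hpositive_selfadj linC posC v u) [ip v (C u)]hs_conj.
move: (ip (C u) u) (ip (C u) v) (ip (C v) v) => [a1 a2] [b1 b2] [d1 d2].
by simpc => /=; ring.
Qed.

(* Nonnegativity of the form of C at u - C u / k, with k = (|K| + 1) / 2. *)
Lemma hpositive_sqnorm_le u : sqnorm (C u) <= (`|K| + 1) / 2 * Re (ip (C u) u).
Proof.
set k := (`|K| + 1) / 2.
have k0 : 0 < k by rewrite /k; have := normr_ge0 K; lra.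
set al := Re (ip (C u) u); set be := sqnorm (C u); set ga := Re (ip (C (C u)) (C u)).
have hga : ga <= k * be.
  have := Re_inner_le (C (C u)) (C u); have := boundC (C u).
  have := ler_norm K; have := sqnorm_ge0 (C u).
  rewrite /ga /k /be; nra.
have := hpositive_Re_ge0 posC (u - k^-1%:C *: C u).
rewrite Re_form_subZ -/al -/ga => hq.
have : ga * k^-1 <= be by rewrite ler_pdivrMr //; nra.
have : k^-1 * k = 1 by rewrite mulVf // lt0r_neq0.
have := sqnorm_ge0 (C u); have : 0 < k^-1 by rewrite invr_gt0.
rewrite -/be; nra.
Qed.

End PositiveBounded.

Section RealInequalities.
Variable R : realType.

Lemma bernoulli_le (h : R) k : 0 <= h -> 1 + k%:R * h <= (1 + h) ^+ k.
Proof.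
move=> h0; elim: k => [|k IH]; first by rewrite expr0 mul0r addr0.
rewrite exprS -natr1.
have : 0 <= k%:R * h :> R by rewrite mulr_ge0.
have : (1 + h) * (1 + k%:R * h) <= (1 + h) * (1 + h) ^+ k by rewrite ler_pM2l //; lra.
nra.
Qed.

Lemma geometric_bound_eq0 (c t a b : R) : 0 < c -> 0 < t -> 0 <= a ->
  (forall k, (c + t) ^+ k * a <= b * t ^+ k) -> a = 0.
Proof.
move=> c0 t0 a0 hk; apply/eqP; rewrite eq_le a0 andbT leNgt; apply/negP => apos.
set h := c / t.
have h0 : 0 < h by rewrite divr_gt0.
set k := Num.bound `|b / (a * h)|.
have bnd : `|b / (a * h)| < k%:R by apply: archi_boundP; apply: normr_ge0.
have tk : 0 < t ^+ k by rewrite exprn_gt0.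
have : (1 + h) ^+ k * a <= b.
  rewrite -(ler_pM2l tk) mulrA -exprMn [t ^+ k * b]mulrC.
  by have -> : t * (1 + h) = c + t by rewrite /h; field; apply: lt0r_neq0.
have := bernoulli_le k (ltW h0).
have : b / (a * h) * (a * h) = b by rewrite divfK // mulf_neq0 // lt0r_neq0.
have := ler_norm (b / (a * h)); have : 0 < a * h by rewrite mulr_gt0.
nra.
Qed.

(* Let s tend to 0. *)
Lemma ge0_low_coef (a b : R) : (forall s, 0 < s -> 0 <= s ^+ 4 * a + s ^+ 6 * b) -> 0 <= a.
Proof.
move=> h; rewrite leNgt; apply/negP => a0.
set t := Num.min 1 ((- a) / (2 * (`|b| + 1))).
have := normr_ge0 b; have := ler_norm b; have := ler_normr b => *.
have d0 : 0 < (- a) / (2 * (`|b| + 1)) by rewrite divr_gt0 //; lra.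
have t0 : 0 < t by rewrite /t lt_min ltr01 d0.
have t1 : t <= 1 by rewrite /t ge_min lexx.
have t2 : t * (2 * (`|b| + 1)) <= - a.
  by rewrite -ler_pdivlMr ?ge_min ?lexx ?orbT //; lra.
have := h t t0.
have -> : t ^+ 6 * b = t ^+ 4 * (t ^+ 2 * b) by rewrite mulrA -exprD.
rewrite -mulrDr pmulr_rge0 ?exprn_gt0 //.
have : t ^+ 2 * b <= t * `|b|.
  have : t ^+ 2 <= t by rewrite expr2 ger_pMr.
  have := ler_norm b; have := normr_ge0 b; have := sqr_ge0 t; nra.
nra.
Qed.

End RealInequalities.

Section SquareRootUniqueness.
Variables (R : realType) (H : chilbert R).
Variables (B C : H -> H) (KB KC c : R).
Hypotheses (linB : hlinear B) (linC : hlinear C) (posB : hpositive B) (posC : hpositive C).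
Hypotheses (boundB : forall x, sqnorm (B x) <= KB * sqnorm x).
Hypotheses (boundC : forall x, sqnorm (C x) <= KC * sqnorm x).
Hypotheses (c0 : 0 < c) (belowB : forall x, c * sqnorm x <= sqnorm (B x)).
Hypothesis sqrBC : forall x, B (B x) = C (C x).

(* With X = B - C, B^2 = C^2 gives (B + t) X = X (t - C). For t large, B + t
   multiplies squared norms by at least c + t^2 and t - C by at most t^2, so
   iterating forces X x = 0. *)
Lemma positive_sqrt_uniq x : B x = C x.
Proof.
set k := (`|KC| + 1) / 2.
have k0 : 0 < k by rewrite /k; have := normr_ge0 KC; lra.
set t := k / 2 + 1.
have t0 : 0 < t by rewrite /t; lra.
pose X w := B w - C w.
pose f w := t%:C *: w - C w.
have intertwine u : B (X u) + t%:C *: X u = X (f u).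
  rewrite /X /f !(hlinearB linB) !(hlinearB linC) !(hlinearZ linB) !(hlinearZ linC).
  by rewrite sqrBC scalerBr opprB [LHS]addrACA [RHS]addrACA (addrC (C (C u))).
have expand v : (c + t ^+ 2) * sqnorm v <= sqnorm (B v + t%:C *: v).
  rewrite sqnormD sqnormZr innerZr conjc_real Re_realM.
  have := belowB v; have := hpositive_Re_ge0 posB v; have := sqnorm_ge0 v; nra.
have contract u : sqnorm (f u) <= t ^+ 2 * sqnorm u.
  rewrite sqnormB sqnormZr innerZl Re_realM (Re_innerC u).
  have := hpositive_sqnorm_le linC posC boundC u; rewrite -/k.
  have : k <= 2 * t by rewrite /t; lra.
  have := hpositive_Re_ge0 posC u; nra.
have boundX w : sqnorm (X w) <= (2 * `|KB| + 2 * `|KC|) * sqnorm w.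
  have := sqnormB_le (B w) (C w); have := boundB w; have := boundC w.
  have := ler_norm KB; have := ler_norm KC; have := sqnorm_ge0 w; rewrite /X; nra.
have iter_contract j : sqnorm (iter j f x) <= (t ^+ 2) ^+ j * sqnorm x.
  elim: j => [|j IH]; first by rewrite expr0 mul1r.
  rewrite iterS exprS -mulrA; apply: (le_trans (contract _)).
  by rewrite ler_pM2l // exprn_gt0.
have iter_expand j : (c + t ^+ 2) ^+ j * sqnorm (X x) <= sqnorm (X (iter j f x)).
  elim: j => [|j IH]; first by rewrite expr0 mul1r.
  rewrite iterS exprS -mulrA -intertwine; apply: le_trans (expand _).
  by rewrite ler_pM2l // ltr_wpDr // sqr_ge0.
have : sqnorm (X x) = 0.
  apply: (@geometric_bound_eq0 R c (t ^+ 2) _ ((2 * `|KB| + 2 * `|KC|) * sqnorm x)).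
  - exact: c0.
  - by rewrite exprn_gt0.
  - exact: sqnorm_ge0.
  move=> j; apply: (le_trans (iter_expand j)); apply: (le_trans (boundX _)).
  rewrite -mulrA; apply: ler_wpM2l; first by have := normr_ge0 KB; have := normr_ge0 KC; lra.
  by rewrite mulrC; exact: iter_contract.
by move/sqnorm_eq0/eqP; rewrite subr_eq0 => /eqP.
Qed.

End SquareRootUniqueness.

Lemma hinvertible_sqnorm_ge (R : realType) (H : chilbert R) (T : H -> H) :
  hinvertible T -> exists2 c, 0 < c & forall x, c * sqnorm x <= sqnorm (T x).
Proof.
case=> S [[_ [K hK]] [_ hST]].
have K1 : 0 < K ^+ 2 + 1 by have := sqr_ge0 K; lra.
exists (1 / (K ^+ 2 + 1)); first by rewrite divr_gt0.
move=> x; have := sqnorm_le_of_hnorm hK (T x); rewrite hST => hx.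
rewrite mulrC mulrA mulr1 ler_pdivrMr //.
have := sqnorm_ge0 (T x); have := sqr_ge0 K; nra.
Qed.

Lemma positive_sqrt_uniq_range (R : realType) (H : chilbert R) (B C : H -> H) (K : R) :
  hlinear B -> hlinear C -> hpositive B -> hpositive C -> hinvertible B ->
  (forall x, sqnorm (B x) <= K * sqnorm x) -> (forall x, sqnorm (C x) <= K * sqnorm x) ->
  (forall u, C (C (B u)) = B (B (B u))) -> C = B.
Proof.
move=> linB linC posB posC invB boundB boundC sqrBC.
have [c c0 belowB] := hinvertible_sqnorm_ge invB.
have [S [_ [BS _]]] := invB.
apply: functional_extensionality => x; apply: esym.
apply: (positive_sqrt_uniq linB linC posB posC boundB boundC c0 belowB).
by move=> v; rewrite -[v]BS sqrBC.
Qed.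

Lemma l2_sqnorm (R : realType) (H : chilbert R) (x : nat -> H) :
  l2 x <-> exists M, forall N, \sum_(k < N) sqnorm (x k) <= M.
Proof.
split=> -[M hM]; exists M => N.
  by under eq_bigr do rewrite -hnorm_sqr.
by under eq_bigr do rewrite hnorm_sqr.
Qed.

Section QuadraticShift.
Variables (R : realType) (H : chilbert R) (A : nat -> H -> H) (M : R).
Hypotheses (linA : forall n, hlinear (A n)) (posA : forall n, hpositive (A n)).
Hypotheses (M0 : 0 <= M) (boundA : forall n x, sqnorm (A n x) <= M * sqnorm x).
Local Notation ip := (@hs_inner R H).
Implicit Types (x y : nat -> H) (lam : R[i]).

Definition qshift lam x : nat -> H :=
  fun n => wshift A x n + lam *: wshift A (wshift A x) n.

Definition qshift_adj lam y : nat -> H :=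
  fun k => A k (y k.+1) + lam^*%C *: A k (A k.+1 (y k.+2)).

Lemma qshift_adj_l2 lam y : l2 y -> l2 (qshift_adj lam y).
Proof.
move=> /l2_sqnorm [My hMy]; apply/l2_sqnorm.
set L := Re lam^*%C ^+ 2 + Im lam^*%C ^+ 2.
have L0 : 0 <= L by rewrite /L addr_ge0 // sqr_ge0.
exists ((2 * M + 2 * L * (M * M)) * My) => N.
have b1 : \sum_(k < N) sqnorm (y k.+1) <= My.
  by apply: le_trans (hMy N.+1); rewrite big_ord_recl /= lerDr sqnorm_ge0.
have b2 : \sum_(k < N) sqnorm (y k.+2) <= My.
  apply: le_trans (hMy N.+2); rewrite big_ord_recl big_ord_recl /= addrA lerDr.
  by rewrite addr_ge0 // sqnorm_ge0.
have term k : sqnorm (qshift_adj lam y k) <=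
    2 * M * sqnorm (y k.+1) + 2 * L * (M * M) * sqnorm (y k.+2).
  have := sqnormD_le (A k (y k.+1)) (lam^*%C *: A k (A k.+1 (y k.+2))).
  rewrite sqnormZ -/L.
  have := boundA k (y k.+1); have := boundA k.+1 (y k.+2).
  have := boundA k (A k.+1 (y k.+2)); have := sqnorm_ge0 (A k.+1 (y k.+2)).
  move=> p1 p2 p3 p4 p5.
  have : M * sqnorm (A k.+1 (y k.+2)) <= M * (M * sqnorm (y k.+2)) by apply: ler_wpM2l.
  nra.
apply: (@le_trans _ _ (\sum_(k < N)
    (2 * M * sqnorm (y k.+1) + 2 * L * (M * M) * sqnorm (y k.+2)))).
  by apply: ler_sum => k _; exact: term.
rewrite big_split /= -!mulr_sumr.
have My0 : 0 <= My by apply: le_trans (hMy 0%N); rewrite big_ord0.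
have := ler_wpM2l (mulr_ge0 (mulr_ge0 (ler0n _ 2) L0) (mulr_ge0 M0 M0)) b2.
have := ler_wpM2l (mulr_ge0 (ler0n _ 2) M0) b1.
nra.
Qed.

Definition shift_pair x y k := ip (A k (x k)) (y k.+1).
Definition shift2_pair x y k := ip (A k.+1 (A k (x k))) (y k.+2).

Lemma inner_qshift_adj lam x y k :
  ip (x k) (qshift_adj lam y k) = shift_pair x y k + lam * shift2_pair x y k.
Proof.
rewrite /qshift_adj innerDr innerZr conjcK /shift_pair /shift2_pair.
by rewrite !(hpositive_selfadj (linA _) (posA _)).
Qed.

Lemma sum_inner_qshift lam x y N :
  \sum_(k < N.+2) ip (qshift lam x k) (y k) =
  \sum_(k < N.+1) shift_pair x y k + lam * \sum_(k < N) shift2_pair x y k.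
Proof.
elim: N => [|N IH].
  rewrite !big_ord_recr !big_ord0 /= /qshift /= (hlinear0 (linA 0)) !scaler0 !addr0.
  by rewrite !add0r inner0l add0r mulr0 addr0.
rewrite big_ord_recr IH /= (big_ord_recr N.+1 (shift_pair x y)).
rewrite (big_ord_recr N (shift2_pair x y)) /=.
by rewrite /qshift /= innerDl innerZl /shift_pair /shift2_pair; ring.
Qed.

Lemma sum_inner_qshift_adj lam x y N :
  \sum_(k < N.+2) ip (x k) (qshift_adj lam y k) =
  \sum_(k < N.+1) shift_pair x y k + shift_pair x y N.+1 +
  lam * (\sum_(k < N) shift2_pair x y k + shift2_pair x y N + shift2_pair x y N.+1).
Proof.
under eq_bigr do rewrite inner_qshift_adj.
rewrite big_split /= -mulr_sumr [in LHS]big_ord_recr [X in _ + lam * X]big_ord_recr /=.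
by rewrite [X in _ + lam * (X + _)]big_ord_recr.
Qed.

Lemma sum_inner_qshift_sub lam x y N :
  \sum_(k < N.+2) ip (qshift lam x k) (y k) - \sum_(k < N.+2) ip (x k) (qshift_adj lam y k) =
  - (shift_pair x y N.+1 + lam * (shift2_pair x y N + shift2_pair x y N.+1)).
Proof. by rewrite sum_inner_qshift sum_inner_qshift_adj; ring. Qed.

Lemma cabs_shift_pair_lt x y k ep : sqnorm (x k) < ep -> sqnorm (y k.+1) < ep ->
  cabs (shift_pair x y k) < (1 + M) * ep.
Proof.
move=> hx hy; have ep0 : 0 < ep by apply: le_lt_trans hx; exact: sqnorm_ge0.
apply: cabs_inner_lt; first by rewrite mulr_gt0 // ltr_wpDr.
have := boundA k (x k); have := ler_wpM2l M0 (ltW hx); lra.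
Qed.

Lemma cabs_shift2_pair_lt x y k ep : sqnorm (x k) < ep -> sqnorm (y k.+2) < ep ->
  cabs (shift2_pair x y k) < (1 + M * M) * ep.
Proof.
move=> hx hy; have ep0 : 0 < ep by apply: le_lt_trans hx; exact: sqnorm_ge0.
apply: cabs_inner_lt; first by rewrite mulr_gt0 // ltr_wpDr // mulr_ge0.
have := boundA k.+1 (A k (x k)); have := ler_wpM2l M0 (boundA k (x k)).
have := ler_wpM2l (mulr_ge0 M0 M0) (ltW hx); lra.
Qed.

(* The partial sums of the two series differ by boundary terms, which vanish
   because x and y are square-summable. *)
Lemma qshift_adjoint lam : l2_adjoint (qshift_adj lam) (qshift lam).
Proof.
split=> [|x y hx hy]; first exact: qshift_adj_l2.
apply: eq_cseries_sum => e e0.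
have l0 := cabs_ge0 lam.
set K := 1 + M + 2 * (1 + M * M).
have K0 : 0 < K by rewrite /K; nra.
set ep := e / ((cabs lam + 1) * K).
have ep0 : 0 < ep by rewrite /ep divr_gt0 // mulr_gt0 //; lra.
have eE : e = (cabs lam + 1) * K * ep.
  by rewrite /ep mulrC divfK // mulf_neq0 // lt0r_neq0 //; lra.
have [Nx HNx] := bounded_psum_tail_lt (fun k => sqnorm_ge0 (x k)) (proj1 (l2_sqnorm x) hx) ep0.
have [Ny HNy] := bounded_psum_tail_lt (fun k => sqnorm_ge0 (y k)) (proj1 (l2_sqnorm y) hy) ep0.
exists (maxn Nx Ny).+2 => n hn; have -> : n = (n - 2).+2 by lia.
rewrite sum_inner_qshift_sub cabsN; set m := (n - 2)%N.
have hxk k : (m <= k)%N -> sqnorm (x k) < ep by move=> hk; apply: HNx; lia.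
have hyk k : (m <= k)%N -> sqnorm (y k) < ep by move=> hk; apply: HNy; lia.
have := cabs_shift_pair_lt (hxk m.+1 ltac:(lia)) (hyk m.+2 ltac:(lia)).
have := cabs_shift2_pair_lt (hxk m ltac:(lia)) (hyk m.+2 ltac:(lia)).
have := cabs_shift2_pair_lt (hxk m.+1 ltac:(lia)) (hyk m.+3 ltac:(lia)).
have := cabsD_le (shift2_pair x y m) (shift2_pair x y m.+1).
move=> hD hb2 hb1 ha; apply: le_lt_trans (cabsD_le _ _) _; rewrite cabsM eE /K.
have : cabs lam * cabs (shift2_pair x y m + shift2_pair x y m.+1) <=
    cabs lam * (2 * (1 + M * M) * ep) by apply: ler_wpM2l => //; lra.
have := mulr_ge0 l0 (mulr_ge0 (addr_ge0 ler01 M0) (ltW ep0)).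
have := mulr_ge0 M0 M0; nra.
Qed.

End QuadraticShift.

Section TestVectors.
Variables (R : realType) (H : chilbert R).
Implicit Types (a b c : H) (p : nat).

Definition vec3 p a b c (k : nat) : H :=
  if k == p then a else if k == p.+1 then b else if k == p.+2 then c else 0.

Lemma vec3_out p a b c k : k != p -> k != p.+1 -> k != p.+2 -> vec3 p a b c k = 0.
Proof. by move=> /negbTE h0 /negbTE h1 /negbTE h2; rewrite /vec3 h0 h1 h2. Qed.

Lemma vec3_at0 p a b c : vec3 p a b c p = a.
Proof. by rewrite /vec3 eqxx. Qed.

Lemma vec3_at1 p a b c : vec3 p a b c p.+1 = b.
Proof.
have h0 : (p.+1 == p) = false by apply/eqP; lia.
by rewrite /vec3 h0 eqxx.
Qed.

Lemma vec3_at2 p a b c : vec3 p a b c p.+2 = c.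
Proof.
have h0 : (p.+2 == p) = false by apply/eqP; lia.
have h1 : (p.+2 == p.+1) = false by apply/eqP; lia.
by rewrite /vec3 h0 h1 eqxx.
Qed.

Lemma vec3_at3 p a b c : vec3 p a b c p.+3 = 0.
Proof. by apply: vec3_out; apply/eqP; lia. Qed.

Lemma vec3_at4 p a b c : vec3 p a b c p.+4 = 0.
Proof. by apply: vec3_out; apply/eqP; lia. Qed.

Lemma vec3S_at p a b c : vec3 p.+1 a b c p = 0.
Proof. by apply: vec3_out; apply/eqP; lia. Qed.

Lemma vec3SS_at p a b c : vec3 p.+2 a b c p = 0.
Proof. by apply: vec3_out; apply/eqP; lia. Qed.

Lemma vec3_l2 p a b c : l2 (vec3 p a b c).
Proof.
apply/l2_sqnorm; exists (sqnorm a + sqnorm b + sqnorm c) => N.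
apply: le_trans (ler_psum_widen (fun k => sqnorm_ge0 (vec3 p a b c k)) (leq_addr p.+3 N)) _.
rewrite (@big_supp3 _ (fun k => sqnorm (vec3 p a b c k)) p) ?vec3_at0 ?vec3_at1 ?vec3_at2 //.
  by move=> k h0 h1 h2; rewrite vec3_out // /sqnorm inner0l.
by rewrite addnS ltnS leq_addl.
Qed.

End TestVectors.

Section QuadraticHyponormality.
Variables (R : realType) (H : chilbert R) (A : nat -> H -> H) (M : R).
Hypotheses (linA : forall n, hlinear (A n)) (posA : forall n, hpositive (A n)).
Hypotheses (M0 : 0 <= M) (boundA : forall n x, sqnorm (A n x) <= M * sqnorm x).
Hypothesis quadA : quad_hyponormal (wshift A).
Local Notation ip := (@hs_inner R H).

Definition qform3 (lam : R[i]) p (a b c : H) : R[i] :=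
  let X := vec3 p a b c in
  let Q k := qshift_adj A lam (qshift A lam X) k - qshift A lam (qshift_adj A lam X) k in
  ip (Q p) a + ip (Q p.+1) b + ip (Q p.+2) c.

Lemma qform3_ge0 lam p a b c : 0 <= qform3 lam p a b c.
Proof.
have := quadA (qshift_adjoint linA posA M0 boundA lam) (vec3_l2 p a b c).
rewrite /l2inner (@cseries_sumE _ _ (qform3 lam p a b c)) // => e e0.
pose X := vec3 p a b c.
pose Q k := qshift_adj A lam (qshift A lam X) k - qshift A lam (qshift_adj A lam X) k.
exists p.+3 => n hn; rewrite (@big_supp3 _ (fun k => ip (Q k) (X k)) p n) //.
  by rewrite /X vec3_at0 vec3_at1 vec3_at2 subrr normr0 ltcR.
by move=> k h0 h1 h2; rewrite /X vec3_out // inner0r.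
Qed.

End QuadraticHyponormality.

Section WeightPropagation.
Variables (R : realType) (H : chilbert R) (A : nat -> H -> H) (M : R).
Hypotheses (linA : forall n, hlinear (A n)) (posA : forall n, hpositive (A n)).
Hypothesis invA : forall n, hinvertible (A n).
Hypotheses (M0 : 0 <= M) (boundA : forall n x, sqnorm (A n x) <= M * sqnorm x).
Hypothesis quadA : quad_hyponormal (wshift A).
Local Notation ip := (@hs_inner R H).

Ltac expand_qform3 :=
  rewrite ?vec3_at0 ?vec3_at1 ?vec3_at2 ?vec3S_at ?vec3SS_at ?vec3_at3 ?vec3_at4;
  do 6 rewrite ?(hlinearB (linA _)) ?(hlinearD (linA _)) ?(hlinearN (linA _))
               ?(hlinearZ (linA _)) ?(hlinear0 (linA _));
  do 3 rewrite ?innerBl ?innerBr ?innerDl ?innerDr ?innerNl ?innerNr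
               ?innerZl ?innerZr ?inner0l ?inner0r.

(* The test vector (u, -s B u, s^2 C B u) at positions n + 2, n + 3, n + 4
   kills the terms of order s^0 and s^2. *)
Lemma qform3_up n (s : R) (u : H) : A n = A n.+1 -> A n.+1 = A n.+2 ->
  let B := A n.+2 in let C := A n.+3 in
  let P := C (C (B u)) - B (B (B u)) in
  let v := A n.+4.+1 (A n.+4 (C (B u))) in let w := B (C (C (B u))) in
  qform3 A s%:C n.+2 u (- (s%:C *: B u)) ((s ^+ 2)%:C *: C (B u)) =
  (s ^+ 4)%:C * - ip P P + (s ^+ 6)%:C * (ip v v - ip w w).
Proof.
move=> hn1 hn2 B C P v w.
have sX k : (s ^+ k)%:C = s%:C ^+ k :> R[i] by rewrite rmorphXn.
(* [/=] evaluates the conjugate of s%:C to this form. *)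
have sJ : s -i* 0 = s%:C :> R[i] by rewrite oppr0.
rewrite /qform3 /qshift_adj /qshift /P /v /w /B /C /=.
expand_qform3; rewrite hn1 hn2; expand_qform3.
by rewrite ?(hpositive_selfadj (linA _) (posA _)) ?conjc_real ?sJ !sX; ring.
Qed.

(* The s^6 coefficient r involves A_(p-1), which only exists for p > 0; only the
   s^4 coefficient is used. *)
Lemma qform3_down p (s : R) (w y : H) : A p.+2 = A p.+3 -> A p.+3 = A p.+4 ->
  let B := A p.+4 in let E := A p.+1 in let F := A p in
  let r := ip (E (B (B (E w)))) w -
     (match p with 0 => 0 | q.+1 => ip (F (A q (A q (F w)))) w end) in
  qform3 A s%:C p.+1 ((s ^+ 2)%:C *: w) (- (s%:C *: B y)) y =
  (s ^+ 4)%:C * (ip (E w - B (B (B y))) (E w - B (B (B y)))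
                 - ip (F (w - E (B y))) (F (w - E (B y)))) + (s ^+ 6)%:C * r.
Proof.
move=> hp1 hp2 B E F r.
have sX k : (s ^+ k)%:C = s%:C ^+ k :> R[i] by rewrite rmorphXn.
have sJ : s -i* 0 = s%:C :> R[i] by rewrite oppr0.
case: p hp1 hp2 @B @E @F @r => [|q] hp1 hp2 B E F r;
  rewrite /qform3 /qshift_adj /qshift /r /B /E /F /=;
  expand_qform3; rewrite hp1 hp2; expand_qform3;
  by rewrite ?(hpositive_selfadj (linA _) (posA _)) ?conjc_real ?sJ !sX; ring.
Qed.

Lemma weight_eq_up m : A m = A m.+1 -> A m.+1 = A m.+2 -> A m.+3 = A m.+2.
Proof.
move=> hm1 hm2; apply: (positive_sqrt_uniq_range (linA _) (linA _) (posA _) (posA _)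
  (invA _) (boundA _) (boundA _)) => u.
set P := A m.+3 (A m.+3 (A m.+2 u)) - A m.+2 (A m.+2 (A m.+2 u)).
have : 0 <= - sqnorm P.
  apply: ge0_low_coef => s _.
  have := qform3_ge0 linA posA M0 boundA quadA (s%:C) m.+2 u
    (- (s%:C *: A m.+2 u)) ((s ^+ 2)%:C *: A m.+3 (A m.+2 u)).
  rewrite (qform3_up _ _ hm1 hm2) lecE => /andP[_].
  by rewrite !raddfD /= !Re_realM raddfN; apply.
have := sqnorm_ge0 P => P0 nP0.
have /sqnorm_eq0/eqP : sqnorm P = 0 by lra.
by rewrite subr_eq0 => /eqP.
Qed.

Lemma weight_eq_down p : A p.+2 = A p.+3 -> A p.+3 = A p.+4 -> A p.+1 = A p.+4.
Proof.
move=> hp1 hp2; apply: (positive_sqrt_uniq_range (linA _) (linA _) (posA _) (posA _)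
  (invA _) (boundA _) (boundA _)) => y.
have [Ei [[linEi _] [hEEi _]]] := invA p.+1.
have [Fi [[linFi _] [_ hFiF]]] := invA p.
(* With A_(p+1) w = B^3 y, B = A_(p+4), the s^4 coefficient is -|A_p (w - A_(p+1) B y)|^2,
   so w = A_(p+1) B y and A_(p+1)^2 B y = B^3 y. *)
set w := Ei (A p.+4 (A p.+4 (A p.+4 y))).
set Z := A p (w - A p.+1 (A p.+4 y)).
have Ew : A p.+1 w = A p.+4 (A p.+4 (A p.+4 y)) by rewrite /w hEEi.
have : 0 <= - sqnorm Z.
  apply: ge0_low_coef => s _.
  have := qform3_ge0 linA posA M0 boundA quadA (s%:C) p.+1
    ((s ^+ 2)%:C *: w) (- (s%:C *: A p.+4 y)) y.
  rewrite (qform3_down _ _ _ hp1 hp2) lecE => /andP[_].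
  by rewrite Ew subrr inner0l sub0r !raddfD /= !Re_realM raddfN; apply.
have := sqnorm_ge0 Z => Z0 nZ0.
have /sqnorm_eq0 Zeq0 : sqnorm Z = 0 by lra.
have : w - A p.+1 (A p.+4 y) = 0 by rewrite -[LHS]hFiF -/Z Zeq0 (hlinear0 linFi).
by move/eqP; rewrite subr_eq0 => /eqP <-.
Qed.

End WeightPropagation.

Lemma nat_ind_from (P : nat -> Prop) n :
  P n -> (forall m, P m -> P m.+1) -> (forall m, P m.+2 -> P m.+1) ->
  forall k, (1 <= k)%N -> P k.
Proof.
move=> Pn up down k k1; have [nk|kn] := leqP n k.
  rewrite -(subnKC nk); elim: (k - n)%N => [|j IH]; first by rewrite addn0.
  by rewrite addnS; exact: up.
suff Pdown d : forall j, (1 <= j)%N -> (j + d = n)%N -> P j by apply: (Pdown (n - k)%N); lia.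
elim: d => [|d IH] [|j] // _ e; first by rewrite addn0 in e; rewrite e.
by apply/down/IH; lia.
Qed.

Local Close Scope complex_scope.
Unset Implicit Arguments.

Theorem mainTheorem6 (R : realType) (H : chilbert R) (A : nat -> H -> H)
  (hA : forall n, bounded_op (A n) /\ hpositive (A n) /\ hinvertible (A n))
  (hsup : exists M : R, forall (n : nat) (x : H), hnorm (A n x) <= M * hnorm x)
  (hq : quad_hyponormal (wshift A))
  (n : nat) (hn : A n = A n.+1 /\ A n.+1 = A n.+2) :
  forall k : nat, (1 <= k)%N -> A k = A n.
Proof.
have linA m : hlinear (A m) := (hA m).1.1.
have posA m : hpositive (A m) := (hA m).2.1.
have invA m : hinvertible (A m) := (hA m).2.2.
have [M hM] := hsup.
have boundA m x : sqnorm (A m x) <= M ^+ 2 * sqnorm x := sqnorm_le_of_hnorm (hM m) x.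
have up := weight_eq_up linA posA invA (sqr_ge0 M) boundA hq.
have down := weight_eq_down linA posA invA (sqr_ge0 M) boundA hq.
have [hn1 hn2] := hn.
move=> k k1; suff : [/\ A k = A n, A k.+1 = A n & A k.+2 = A n] by case.
apply: (@nat_ind_from (fun m => [/\ A m = A n, A m.+1 = A n & A m.+2 = A n]) n) => //.
- by split; rewrite // -?hn2 -hn1.
- by move=> m [e0 e1 e2]; split=> //; rewrite (up m) ?e0 ?e1 ?e2.
- by move=> m [e0 e1 e2]; split=> //; rewrite (down m) ?e0 ?e1 ?e2.
Qed.
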